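(* For a $K$-armed bandit with rewards $r\in\mathbb{R}^K$, a full-support softmax policy $\pi=\pi_\theta$, temperature $\eta>0$ and step size $\alpha>0$, let $\theta'(a)=\theta(a)+\alpha w(a)U(a)$ and $\pi'=\pi_{\theta'}$. Then, with $V=\pi^\top r$, $V'=\pi'^\top r$ and $Z=\sum_{a'}\pi(a')e^{\alpha w(a')U(a')}$, \[ V'-V=\frac1Z\sum_{a=1}^K\pi(a)U(a)\big(e^{\alpha w(a)U(a)}-1\big)\;\ge\;0. \]
   Context: $\pi_\theta(a)=e^{\theta(a)}/\sum_{a'}e^{\theta(a')}$; $U(a):=r(a)-\pi^\top r$; $\ell(a):=-\log\pi(a)$; DG gate $w(a):=\sigma(U(a)\ell(a)/\eta)$ with $\sigma(x)=1/(1+e^{-x})$. *)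

From HB Require Import structures.
From mathcomp Require Import all_boot all_order all_algebra.
From mathcomp Require Import all_classical all_reals all_analysis.
Set Implicit Arguments. Unset Strict Implicit. Unset Printing Implicit Defensive.
Import Order.TTheory GRing.Theory Num.Theory.
Local Open Scope ring_scope.

Section Defs.
Variables (R : realType) (K : nat).

Definition softmax (theta : 'I_K -> R) (a : 'I_K) : R :=
  expR (theta a) / \sum_(a' < K) expR (theta a').

Definition value (pi r : 'I_K -> R) : R := \sum_(a < K) pi a * r a.

Definition adv (theta r : 'I_K -> R) (a : 'I_K) : R :=
  r a - value (softmax theta) r.

Definition surprisal (theta : 'I_K -> R) (a : 'I_K) : R :=
  - ln (softmax theta a).

Definition sigmoid (x : R) : R := 1 / (1 + expR (- x)).

Definition gate (eta : R) (theta r : 'I_K -> R) (a : 'I_K) : R :=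
  sigmoid (adv theta r a * surprisal theta a / eta).

Definition dg_update (alpha eta : R) (theta r : 'I_K -> R) (a : 'I_K) : R :=
  theta a + alpha * gate eta theta r a * adv theta r a.

End Defs.

From HB Require Import structures.
From mathcomp Require Import all_boot all_order all_algebra.
From mathcomp Require Import all_classical all_reals all_analysis.
From mathcomp Require Import ring.
Import Order.TTheory GRing.Theory Num.Theory.
Local Open Scope ring_scope.

(* Adding alpha w(a) U(a) to the logits tilts the softmax policy by
   e(a) = exp(alpha w(a) U(a)) and renormalises by Z.  For any distribution pi and
   any tilt e, the value gain is Z^-1 sum_a pi(a) U(a) (e(a) - 1), because
   sum_a pi(a) U(a) = 0.  As the gate w is positive, e(a) - 1 has the sign of U(a),
   so every summand is nonnegative. *)

Lemma sigmoid_gt0 (R : realType) (x : R) : 0 < sigmoid x.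
Proof. by rewrite divr_gt0 // ltr_wpDr ?expR_gt0. Qed.

Section Softmax.
Context {R : realType} {K : nat}.
Implicit Types (theta c e p r : 'I_K -> R).

Lemma sumr_gt0 (a : 'I_K) {F : 'I_K -> R} :
  (forall b, 0 < F b) -> 0 < \sum_(b < K) F b.
Proof.
move=> F_gt0; rewrite (bigD1 a) //= ltr_pwDl //.
by apply: sumr_ge0 => b _; apply: ltW.
Qed.

Lemma sum_expR_gt0 theta (a : 'I_K) : 0 < \sum_(b < K) expR (theta b).
Proof. exact: (sumr_gt0 a (fun b => expR_gt0 (theta b))). Qed.

Lemma softmax_gt0 theta a : 0 < softmax theta a.
Proof. by rewrite divr_gt0 ?expR_gt0 ?(sum_expR_gt0 theta a). Qed.

Lemma sum_softmax theta : (0 < K)%N -> \sum_(a < K) softmax theta a = 1.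
Proof.
move=> K_gt0; rewrite -mulr_suml mulfV //.
by rewrite gt_eqF ?(sum_expR_gt0 theta (Ordinal K_gt0)).
Qed.

Lemma softmax_tilt theta c a :
  softmax (fun b => theta b + c b) a =
  softmax theta a * expR (c a) / \sum_(b < K) softmax theta b * expR (c b).
Proof.
have S_neq0 := gt_eqF (sum_expR_gt0 theta a).
have T_neq0 := gt_eqF (sum_expR_gt0 (fun b => theta b + c b) a).
have -> : \sum_(b < K) softmax theta b * expR (c b)
          = (\sum_(b < K) expR (theta b + c b)) / \sum_(b < K) expR (theta b).
  by rewrite mulr_suml; apply: eq_bigr => b _; rewrite expRD mulrAC.
by rewrite /softmax expRD; field; rewrite S_neq0 T_neq0.
Qed.

Lemma value_tilt p e r :
  \sum_(a < K) p a = 1 -> \sum_(a < K) p a * e a != 0 ->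
  value (fun a => p a * e a / \sum_(b < K) p b * e b) r - value p r =
  (\sum_(a < K) p a * e a)^-1 *
    \sum_(a < K) p a * (r a - value p r) * (e a - 1).
Proof.
move=> p_sum1 Z_neq0; set Z := \sum_(b < K) p b * e b.
have -> : \sum_(a < K) p a * (r a - value p r) * (e a - 1) =
          \sum_(a < K) p a * e a * r a - value p r * Z.
  rewrite (eq_bigr (fun a => p a * e a * r a - value p r * (p a * e a)
                             - (p a * r a - value p r * p a))); last by move=> a _; ring.
  by rewrite !sumrB -!mulr_sumr p_sum1 -/(value p r) -/Z; ring.
rewrite mulrBr [Z^-1 * (_ * Z)]mulrCA mulVf // mulr1 {1}/value mulr_sumr.
by congr (_ - _); apply: eq_bigr => a _; rewrite mulrAC mulrC.
Qed.

Lemma gate_gt0 (eta : R) theta r a : 0 < gate eta theta r a.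
Proof. exact: sigmoid_gt0. Qed.

End Softmax.

Lemma mulr_expR_subr1_ge0 (R : realType) (k u : R) :
  0 <= k -> 0 <= u * (expR (k * u) - 1).
Proof.
move=> k_ge0; have [u_ge0 | u_lt0] := leP 0 u.
  by rewrite mulr_ge0 // subr_ge0 -expR0 ler_expR mulr_ge0.
rewrite mulr_le0 ?(ltW u_lt0) // subr_le0 -[leRHS]expR0 ler_expR.
by rewrite mulr_ge0_le0 ?(ltW u_lt0).
Qed.

Theorem lemma8 (R : realType) (K : nat) (hK : (0 < K)%N)
    (r theta : 'I_K -> R) (eta alpha : R) (heta : 0 < eta) (halpha : 0 < alpha) :
  let pi := softmax theta in
  let U := adv theta r in
  let w := gate eta theta r in
  let pi' := softmax (dg_update alpha eta theta r) in
  let V := value pi r in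
  let V' := value pi' r in
  let Z := \sum_(a' < K) pi a' * expR (alpha * w a' * U a') in
  V' - V = Z^-1 * \sum_(a < K) pi a * U a * (expR (alpha * w a * U a) - 1)
  /\ 0 <= Z^-1 * \sum_(a < K) pi a * U a * (expR (alpha * w a * U a) - 1).
Proof.
move=> pi U w pi' V V' Z.
have Z_gt0 : 0 < Z.
  by apply: (sumr_gt0 (Ordinal hK)) => a; rewrite mulr_gt0 ?softmax_gt0 ?expR_gt0.
have pi'E : pi' = fun a => pi a * expR (alpha * w a * U a) / Z.
  by apply: funext => a; rewrite /pi' softmax_tilt.
split; first by rewrite /V' pi'E value_tilt ?sum_softmax ?gt_eqF.
apply: mulr_ge0; first by rewrite invr_ge0 ltW.
apply: sumr_ge0 => a _.
rewrite -mulrA mulr_ge0 ?(ltW (softmax_gt0 _ _)) // mulr_expR_subr1_ge0 //.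
by rewrite mulr_ge0 ?ltW ?gate_gt0.
Qed.
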